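(* Let $d\in\mathbb{N}$, $a<b$, $\alpha\in[0,1]$, $\rho=\mathrm{diag}(\rho_1,\dots,\rho_d)\in\mathbb{R}^{d\times d}$, and let $L:\mathbb{R}^d\times\mathbb{R}^d\to\mathbb{R}$, $(z,\dot z)\mapsto L(z,\dot z)$, be a $C^2$ function that is even in its second variable, i.e. $L(z,-\dot z)=L(z,\dot z)$. Consider the equations $$\text{(a)}\quad \frac{d}{dt}\Big(\frac{\partial L}{\partial\dot x}(x,\dot x)\Big)-\frac{\partial L}{\partial x}(x,\dot x)+\rho\,D^\alpha_-D^\alpha_-x=0,$$ $$\text{(b)}\quad \frac{d}{dt}\Big(\frac{\partial L}{\partial\dot y}(y,\dot y)\Big)-\frac{\partial L}{\partial y}(y,\dot y)+\rho\,D^\alpha_+D^\alpha_+y=0,$$ for smooth curves $x,y:[a,b]\to\mathbb{R}^d$. If $x$ is a smooth curve and $y(t):=x(a+b-t)$ (so that $y(a)=x(b)$, $y(b)=x(a)$), then equation (b) for $y$ is equation (a) for $x$ in reversed time $\tilde t=a+b-t$: for every $t\in[a,b]$ the left-hand side of (b) evaluated along $y$ at time $t$ equals the left-hand side of (a) evaluated along $x$ at time $\tilde t=a+b-t$. In particular $y$ solves (b) on $[a,b]$ if and only if $x$ solves (a) on $[a,b]$.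
   Context: For $f:[a,b]\to\mathbb{R}$ (componentwise for vector-valued functions), $D^\alpha_-f(t)=\frac{1}{\Gamma(1-\alpha)}\frac{d}{dt}\int_a^t(t-\tau)^{-\alpha}f(\tau)\,d\tau$ and $D^\alpha_+f(t)=-\frac{1}{\Gamma(1-\alpha)}\frac{d}{dt}\int_t^b(\tau-t)^{-\alpha}f(\tau)\,d\tau$ (Riemann–Liouville fractional derivatives); $D^\alpha_\pm D^\alpha_\pm$ denotes the composition. These equations are the restricted fractional Euler–Lagrange equations for the Lagrangian $L(x,\dot x)+L(y,\dot y)-D^\alpha_-x\,\rho\,D^\alpha_+y$. *)

From HB Require Import structures.
From mathcomp Require Import all_boot all_order all_algebra.
From mathcomp Require Import all_classical all_reals all_analysis.
Set Implicit Arguments. Unset Strict Implicit. Unset Printing Implicit Defensive.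
Import Order.TTheory GRing.Theory Num.Theory.
Import numFieldNormedType.Exports.
Local Open Scope classical_set_scope.
Local Open Scope ring_scope.

Section Defs.
Variable R : realType.
Local Notation mu := (@lebesgue_measure R).

Definition Gamma (s : R) : R :=
  Rintegral mu `]0, +oo[ (fun t => t `^ (s - 1) * expR (- t)).

Definition RL_left_int (a alpha : R) (f : R -> R) (t : R) : R :=
  Rintegral mu `[a, t] (fun tau => (t - tau) `^ (- alpha) * f tau).
Definition RL_right_int (b alpha : R) (f : R -> R) (t : R) : R :=
  Rintegral mu `[t, b] (fun tau => (tau - t) `^ (- alpha) * f tau).

Definition RL_Dminus (a alpha : R) (f : R -> R) (t : R) : R :=
  (Gamma (1 - alpha))^-1 * derive1 (RL_left_int a alpha f) t.
Definition RL_Dplus (b alpha : R) (f : R -> R) (t : R) : R :=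
  - ((Gamma (1 - alpha))^-1 * derive1 (RL_right_int b alpha f) t).

Variable d : nat.

Definition Dminus (a alpha : R) (x : R -> 'cV[R]_d) (t : R) : 'cV[R]_d :=
  \col_i RL_Dminus a alpha (fun s => x s i 0) t.
Definition Dplus (b alpha : R) (x : R -> 'cV[R]_d) (t : R) : 'cV[R]_d :=
  \col_i RL_Dplus b alpha (fun s => x s i 0) t.

Definition ddt (x : R -> 'cV[R]_d) (t : R) : 'cV[R]_d :=
  \col_i derive1 (fun s => x s i 0) t.

Definition smooth_curve (x : R -> 'cV[R]_d) : Prop :=
  forall (i : 'I_d) (k : nat) (t : R),
    derivable (derive1n k (fun s => x s i 0)) t 1.

(* Lagrangian L(z, zdot); partial derivative in coordinate direction k of the
   function on R^(d+d) obtained by stacking (z, zdot). *)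
Definition Lstack (L : 'cV[R]_d -> 'cV[R]_d -> R) (w : 'cV[R]_(d + d)) : R :=
  L (usubmx w) (dsubmx w).

Definition partial n (f : 'cV[R]_n -> R) (k : 'I_n) (w : 'cV[R]_n) : R :=
  'D_(delta_mx k 0) f w.

Definition C2 n (f : 'cV[R]_n -> R) : Prop :=
  continuous f /\
  forall k : 'I_n,
    (forall w, derivable f w (delta_mx k 0)) /\ continuous (partial f k) /\
    forall l : 'I_n,
      (forall w, derivable (partial f k) w (delta_mx l 0)) /\
      continuous (partial (partial f k) l).

Definition dLdz (L : 'cV[R]_d -> 'cV[R]_d -> R) (z v : 'cV[R]_d) : 'cV[R]_d :=
  \col_i 'D_(delta_mx i 0) (fun w => L w v) z.
Definition dLdv (L : 'cV[R]_d -> 'cV[R]_d -> R) (z v : 'cV[R]_d) : 'cV[R]_d :=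
  \col_i 'D_(delta_mx i 0) (fun w => L z w) v.

Definition lhs_a (L : 'cV[R]_d -> 'cV[R]_d -> R) (rho : 'M[R]_d) (a alpha : R)
  (x : R -> 'cV[R]_d) (t : R) : 'cV[R]_d :=
  ddt (fun s => dLdv L (x s) (ddt x s)) t - dLdz L (x t) (ddt x t)
  + rho *m Dminus a alpha (Dminus a alpha x) t.

Definition lhs_b (L : 'cV[R]_d -> 'cV[R]_d -> R) (rho : 'M[R]_d) (b alpha : R)
  (y : R -> 'cV[R]_d) (t : R) : 'cV[R]_d :=
  ddt (fun s => dLdv L (y s) (ddt y s)) t - dLdz L (y t) (ddt y t)
  + rho *m Dplus b alpha (Dplus b alpha y) t.

End Defs.

From HB Require Import structures.
From mathcomp Require Import all_boot all_order all_algebra.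
From mathcomp Require Import all_classical all_reals all_analysis.
From mathcomp Require Import lra.
Import Order.TTheory GRing.Theory Num.Theory.
Import numFieldNormedType.Exports.
Local Open Scope ring_scope.
Local Open Scope classical_set_scope.

(* The time reversal s |-> c - s is a measure-preserving involution of R that
   flips the sign of every difference quotient.  It therefore maps the right
   Riemann-Liouville integral on [t, b] to the left one on [c - b, c - t], so
   D^alpha_+ along the reversed curve is D^alpha_- along the original one, while
   each time derivative changes sign.  Since L is even in the velocity, dL/dzdot
   is odd and dL/dz is even in it, so the two sign changes in the momentum term
   cancel.  No convergence or measurability is needed: both sides of each
   identity undergo the same change of variables, junk values included. *)

Section derive_reverse.
Context {R : numFieldType} {V : normedModType R}.

Lemma dnbhs0N : -%R @ (0 : R)^' = (0 : R)^'.
Proof.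
have opp_dnbhs0 (A : set R) : 0^' A -> 0^' (-%R @^-1` A).
  move=> [e /= e0 eA]; exists e => //= h; rewrite /ball_ /= !sub0r normrN => he hn0.
  by apply: eA; rewrite /ball_ /= ?sub0r ?normrN ?oppr_eq0.
apply/seteqP; split => A; last exact: opp_dnbhs0.
move=> /opp_dnbhs0; rewrite /= -comp_preimage (_ : -%R \o -%R = id) //.
by apply/funext => x /=; rewrite opprK.
Qed.

(* Without convergence both limits are the default value 0. *)
Lemma limN_total {T : Type} (F : set_system T) {FF : ProperFilter F} (f : T -> R) :
  lim ((fun x => - f x) @ F) = - lim (f @ F).
Proof.
have [cf|ncf] := pselect (cvg (f @ F)); first exact: limN.
rewrite (dvgP ncf) dvgP; last by rewrite is_cvgNE.
by rewrite -[point]/(0 : R) oppr0.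
Qed.

Lemma derive1_reverse (f : R -> R) (c t : R) :
  derive1 (fun s => f (c - s)) t = - derive1 f (c - t).
Proof.
rewrite /derive1 -limN_total -[in RHS]dnbhs0N -fmap_comp.
congr lim; apply: (congr1 (fmap^~ _)); apply/funext => h /=.
by rewrite invrN scaleNr opprK opprD addrCA.
Qed.

Lemma derive1N_total (f : R -> R) (t : R) :
  derive1 (fun s => - f s) t = - derive1 f t.
Proof.
rewrite /derive1 -limN_total; congr lim; apply: (congr1 (fmap^~ _)).
by apply/funext => h /=; rewrite -scalerN opprB opprK addrC.
Qed.

Lemma derive_even (f : V -> R) (e v : V) :
  (forall w, f (- w) = f w) -> 'D_e f (- v) = - 'D_e f v.
Proof.
move=> f_even; rewrite /derive -limN_total -[in RHS]dnbhs0N -fmap_comp.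
congr lim; apply: (congr1 (fmap^~ _)); apply/funext => h /=.
rewrite invrN scaleNr opprK [f (- v)]f_even -[f (h *: e - v)]f_even.
by rewrite opprB scaleNr [- (h *: e) + v]addrC.
Qed.

End derive_reverse.

Section integral_comp_involution.
Context d (T : measurableType d) (R : realType) (mu : {measure set T -> \bar R}).
Variable phi : T -> T.
Hypotheses (phiK : involutive phi) (mphi : measurable_fun setT phi)
  (mu_phi : forall A, measurable A -> mu (phi @^-1` A) = mu A).

Import HBNNSimple.
Local Open Scope ereal_scope.

Section nnsfun_comp.
Variable h : {nnsfun T >-> R}.

Definition comp_involution : T -> R := h \o phi.

Let comp_measurable : measurable_fun setT comp_involution.
Proof. exact: measurableT_comp (measurable_funPT h) mphi. Qed.
HB.instance Definition _ :=
  isMeasurableFun.Build _ _ _ _ comp_involution comp_measurable.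

Let comp_fimfun : finite_set (range comp_involution).
Proof.
apply: sub_finite_set (@fimfunP _ _ h).
by move=> _ [x _ <-]; exists (phi x).
Qed.
HB.instance Definition _ := FiniteImage.Build _ _ comp_involution comp_fimfun.

Let comp_ge0 x : (0 <= comp_involution x)%R.
Proof. exact: fun_ge0. Qed.
HB.instance Definition _ := isNonNegFun.Build _ _ comp_involution comp_ge0.

Lemma sintegral_comp_involution : sintegral mu comp_involution = sintegral mu h.
Proof.
rewrite !sintegralET; apply: eq_fsbigr => r _; congr (_ * _).
by rewrite comp_preimage mu_phi //; exact: measurable_funPTI.
Qed.

End nnsfun_comp.

(* Both sides are suprema of simple integrals, and h |-> h \o phi is a bijection
   between the simple functions below k and those below k \o phi; so k need not
   be measurable. *)
Lemma ge0_integralT_comp_involution (k : T -> \bar R) : (forall x, 0 <= k x) ->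
  \int[mu]_x k (phi x) = \int[mu]_x k x.
Proof.
move=> k0; rewrite !ge0_integralTE //; congr ereal_sup.
apply/seteqP; split => _ [h hk <-].
  exists (comp_involution h : {nnsfun T >-> R}); last exact: sintegral_comp_involution.
  by move=> x /=; have := hk (phi x); rewrite /= phiK.
exists (comp_involution h : {nnsfun T >-> R}) => [x|]; first exact: hk.
exact: sintegral_comp_involution.
Qed.

Lemma integral_comp_involution (D : set T) (f : T -> \bar R) :
  \int[mu]_(x in phi @^-1` D) f (phi x) = \int[mu]_(x in D) f x.
Proof.
rewrite integral_mkcond [RHS]integral_mkcond.
have -> : (fun x => f (phi x)) \_ (phi @^-1` D) = (f \_ D) \o phi by apply/funext.
rewrite integralE [RHS]integralE.
have -> : ((f \_ D) \o phi)^\+ = (f \_ D)^\+ \o phi.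
  by apply/funext => x /=; rewrite !funeposE.
have -> : ((f \_ D) \o phi)^\- = (f \_ D)^\- \o phi.
  by apply/funext => x /=; rewrite !funenegE.
by congr (_ - _); apply: ge0_integralT_comp_involution.
Qed.

End integral_comp_involution.

Section lebesgue_measure_reverse.
Context {R : realType}.
Local Notation mu := (@lebesgue_measure R).

Lemma measurable_fun_reverse (c : R) : measurable_fun setT (fun x : R => c - x).
Proof. exact: measurable_realfun.measurable_funB. Qed.

Lemma lebesgue_measure_reverse (c : R) (A : set R) : measurable A ->
  mu ((fun x => c - x) @^-1` A) = mu A.
Proof.
move=> mA.
pose rev_c : measurableTypeR R -> measurableTypeR R := fun x => c - x.
have mc : measurable_fun setT rev_c := measurable_fun_reverse c.
pose nu : {measure set (measurableTypeR R) -> \bar R} := pushforward mu rev_c.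
rewrite [RHS](@lebesgue_measure_unique R (nu mc) _ A mA) // => _ [[p q] _ <-].
change (mu `]p, q] = mu (rev_c @^-1` `]p, q])).
have -> : rev_c @^-1` `]p, q] = `[c - q, c - p[.
  apply/seteqP; split => x; rewrite /rev_c /= !in_itv /= => /andP[? ?];
    by apply/andP; split; lra.
rewrite !lebesgue_measure_itv /= !lte_fin ltrD2l ltrN2.
by case: ifP => // _; rewrite -!EFinD; congr (_%:E); lra.
Qed.

Lemma integral_reverse (c : R) (D : set R) (g : R -> \bar R) :
  (\int[mu]_(x in (fun x => c - x)%R @^-1` D) g (c - x)%R = \int[mu]_(x in D) g x)%E.
Proof.
apply: integral_comp_involution.
- by move=> x; rewrite subKr.
- exact: measurable_fun_reverse.
- exact: lebesgue_measure_reverse.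
Qed.

End lebesgue_measure_reverse.

Section time_reversal.
Context {R : realType}.

Lemma RL_right_int_reverse (b c alpha : R) (f : R -> R) (t : R) :
  RL_right_int b alpha (fun s => f (c - s)) t = RL_left_int (c - b) alpha f (c - t).
Proof.
rewrite /RL_right_int /RL_left_int /Rintegral -[in RHS](integral_reverse c).
have -> : (fun x => c - x) @^-1` `[c - b, c - t] = `[t, b].
  apply/seteqP; split => s; rewrite /= !in_itv /= => /andP[? ?];
    by apply/andP; split; lra.
by congr fine; apply: eq_integral => s _; congr ((_ `^ _ * _)%:E); lra.
Qed.

Lemma RL_Dplus_reverse (b c alpha : R) (f : R -> R) (t : R) :
  RL_Dplus b alpha (fun s => f (c - s)) t = RL_Dminus (c - b) alpha f (c - t).
Proof.
rewrite /RL_Dplus /RL_Dminus.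
have -> : RL_right_int b alpha (fun s => f (c - s)) =
          (fun s => RL_left_int (c - b) alpha f (c - s)).
  by apply/funext => s; exact: RL_right_int_reverse.
by rewrite derive1_reverse mulrN opprK.
Qed.

Context {d : nat}.
Implicit Types x F : R -> 'cV[R]_d.

Lemma Dplus_reverse (b c alpha : R) x :
  Dplus b alpha (fun s => x (c - s)) = (fun t => Dminus (c - b) alpha x (c - t)).
Proof.
apply/funext => t; apply/matrixP => i j; rewrite !mxE.
exact: (RL_Dplus_reverse _ _ _ (fun u => x u i 0)).
Qed.

Lemma ddt_reverse (c : R) x (t : R) : ddt (fun s => x (c - s)) t = - ddt x (c - t).
Proof.
apply/matrixP => i j; rewrite !mxE.
exact: (derive1_reverse (fun u => x u i 0)).
Qed.

Lemma ddt_opp_reverse (c : R) F (t : R) : ddt (fun s => - F (c - s)) t = ddt F (c - t).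
Proof.
apply/matrixP => i j; rewrite !mxE.
under eq_fun do rewrite mxE.
by rewrite derive1N_total (derive1_reverse (fun u => F u i 0)) opprK.
Qed.

Section even_lagrangian.
Variable L : 'cV[R]_d -> 'cV[R]_d -> R.
Hypothesis L_even : forall z v, L z (- v) = L z v.

Lemma dLdv_even (z v : 'cV[R]_d) : dLdv L z (- v) = - dLdv L z v.
Proof. by apply/matrixP => i j; rewrite !mxE; apply: derive_even. Qed.

Lemma dLdz_even (z v : 'cV[R]_d) : dLdz L z (- v) = dLdz L z v.
Proof.
by rewrite /dLdz (_ : (fun w => L w (- v)) = (fun w => L w v)) //; apply/funext.
Qed.

Lemma ddt_dLdv_reverse (c : R) x (t : R) :
  ddt (fun s => dLdv L (x (c - s)) (ddt (fun s' => x (c - s')) s)) t =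
  ddt (fun s => dLdv L (x s) (ddt x s)) (c - t).
Proof.
transitivity (ddt (fun s => - dLdv L (x (c - s)) (ddt x (c - s))) t).
  apply: (congr1 (fun G : R -> 'cV[R]_d => ddt G t)); apply/funext => s.
  by rewrite ddt_reverse dLdv_even.
exact: ddt_opp_reverse.
Qed.

Lemma lhs_b_reverse (rho : 'M[R]_d) (b c alpha : R) x (t : R) :
  lhs_b L rho b alpha (fun s => x (c - s)) t = lhs_a L rho (c - b) alpha x (c - t).
Proof.
rewrite /lhs_b /lhs_a !Dplus_reverse ddt_reverse dLdz_even.
(* Rewriting with ddt_dLdv_reverse would try to unify it with the right-hand
   ddt term by unfolding both, which is very slow. *)
by apply: (congr1 (fun m => m - _ + _)); exact: ddt_dLdv_reverse.
Qed.

End even_lagrangian.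
End time_reversal.

Theorem proposition3p8 (R : realType) (d : nat) (a b alpha : R)
  (rho : 'M[R]_d) (L : 'cV[R]_d -> 'cV[R]_d -> R) (x : R -> 'cV[R]_d) :
  a < b -> 0 <= alpha <= 1 -> is_diag_mx rho ->
  C2 (Lstack L) -> (forall z v, L z (- v) = L z v) ->
  smooth_curve x ->
  let y := fun t => x (a + b - t) in
  (forall t, a <= t <= b -> lhs_b L rho b alpha y t = lhs_a L rho a alpha x (a + b - t)) /\
  ((forall t, a <= t <= b -> lhs_b L rho b alpha y t = 0) <->
   (forall t, a <= t <= b -> lhs_a L rho a alpha x t = 0)).
Proof.
move=> _ _ _ _ L_even _ y.
have lhs_ba t : lhs_b L rho b alpha y t = lhs_a L rho a alpha x (a + b - t).
  by rewrite /y (lhs_b_reverse _ L_even) addrK.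
split=> [t _|]; first exact: lhs_ba.
split=> lhs0 t /andP[a_le_t t_le_b].
  have := lhs0 (a + b - t); rewrite lhs_ba subKr; apply.
  by apply/andP; split; lra.
by rewrite lhs_ba; apply: lhs0; apply/andP; split; lra.
Qed.
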